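(* Let $f:\mathbb{R}^n\to\mathbb{R}$ be continuously differentiable, $\varphi:\mathbb{R}^n\to\mathbb{R}$ convex, $\psi=f+\varphi$, and $\Lambda$ symmetric positive definite. Each of the two maps (a) $g(x)=\psi'(x;d_s(x))\,d_s(x)$ and (b) $g(x)=F^{\Lambda}_{\mathrm{nat}}(x)$ has the following property: whenever $g(x)\neq0$, there exist $r,\epsilon>0$ such that $\|g(y)\|\ge\epsilon$ for all $y\in B_r(x)$.
   Context: $\|\cdot\|$ is the Euclidean norm and $B_r(x)$ the open ball. $\psi'(x;d)$ is the directional derivative, $\partial\psi(x)=\nabla f(x)+\partial\varphi(x)$; $d_s(x)=\arg\min_{\|d\|\le1}\psi'(x;d)$ if $0\notin\partial\psi(x)$ and $d_s(x)=0$ otherwise. $\mathrm{prox}^{\Lambda}_{\varphi}(z)=\arg\min_y\varphi(y)+\frac12(y-z)^T\Lambda(y-z)$ and $F^{\Lambda}_{\mathrm{nat}}(x)=x-\mathrm{prox}^{\Lambda}_{\varphi}(x-\Lambda^{-1}\nabla f(x))$. *)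

From HB Require Import structures.
From mathcomp Require Import all_boot all_order all_algebra.
From mathcomp Require Import all_classical all_reals all_analysis.
Set Implicit Arguments. Unset Strict Implicit. Unset Printing Implicit Defensive.
Import Order.TTheory GRing.Theory Num.Theory.
Import numFieldNormedType.Exports.
Local Open Scope classical_set_scope.
Local Open Scope ring_scope.

Section Defs.
Variables (R : realType) (n : nat).
Notation vec := 'cV[R]_n.

Definition dotv (u v : vec) : R := (u^T *m v) 0 0.
Definition enorm (v : vec) : R := Num.sqrt (dotv v v).

Definition is_gradient (f : vec -> R) (x v : vec) : Prop :=
  forall eps : R, 0 < eps -> exists delta : R, 0 < delta /\
    forall h : vec, enorm h < delta ->
      `| f (x + h) - f x - dotv v h | <= eps * enorm h.

Definition vcontinuous (G : vec -> vec) : Prop :=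
  forall x : vec, forall eps : R, 0 < eps -> exists delta : R, 0 < delta /\
    forall y : vec, enorm (y - x) < delta -> enorm (G y - G x) < eps.

Definition C1_with_gradient (f : vec -> R) (gradf : vec -> vec) : Prop :=
  (forall x, is_gradient f x (gradf x)) /\ vcontinuous gradf.

Definition convex_fun (phi : vec -> R) : Prop :=
  forall (x y : vec) (t : R), 0 <= t -> t <= 1 ->
    phi (t *: x + (1 - t) *: y) <= t * phi x + (1 - t) * phi y.

Definition sym_pos_def (L : 'M[R]_n) : Prop :=
  L^T = L /\ forall v : vec, v != 0 -> 0 < dotv v (L *m v).

Definition dirder (psi : vec -> R) (x d : vec) : R :=
  lim ((fun t : R => (psi (x + t *: d) - psi x) / t) @ at_right (0 : R)).

Definition subdiff (phi : vec -> R) (x : vec) : set vec :=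
  [set v | forall y : vec, phi x + dotv v (y - x) <= phi y].

(* partial psi(x) = grad f(x) + partial phi(x) *)
Definition subdiff_comp (gradf : vec -> vec) (phi : vec -> R) (x : vec) : set vec :=
  [set gradf x + v | v in subdiff phi x].

Definition dsteep (f phi : vec -> R) (gradf : vec -> vec) (x : vec) : vec :=
  if asbool (subdiff_comp gradf phi x 0) then 0
  else xget 0 [set d | enorm d <= 1 /\
         forall e : vec, enorm e <= 1 ->
           dirder (f \+ phi) x d <= dirder (f \+ phi) x e].

Definition prox (L : 'M[R]_n) (phi : vec -> R) (z : vec) : vec :=
  xget 0 [set y | forall w : vec,
     phi y + 2^-1 * dotv (y - z) (L *m (y - z))
       <= phi w + 2^-1 * dotv (w - z) (L *m (w - z))].

Definition Fnat (L : 'M[R]_n) (phi : vec -> R) (gradf : vec -> vec) (x : vec) : vec :=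
  x - prox L phi (x - invmx L *m gradf x).

Definition g_steep (f phi : vec -> R) (gradf : vec -> vec) (x : vec) : vec :=
  dirder (f \+ phi) x (dsteep f phi gradf x) *: dsteep f phi gradf x.

Definition locally_bounded_away (g : vec -> vec) : Prop :=
  forall x : vec, g x != 0 -> exists r eps : R, 0 < r /\ 0 < eps /\
    forall y : vec, enorm (y - x) < r -> eps <= enorm (g y).

End Defs.

(* For fixed y the directional derivative
   D(y, d) = <grad f y, d> + inf_(t > 0) (phi (y + t d) - phi y) / t
   is convex and positively homogeneous in d.  Hence a minimiser of D(y, .) on
   the unit ball with negative value has norm 1, and in every case
   ||g(y)|| = - min_(||d|| <= 1) D(y, d).  Each difference quotient is
   continuous in y (convex functions on R^n are continuous), so y |-> D(y, d)
   is upper semicontinuous and ||g|| is lower semicontinuous.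
   For (b), adding the variational inequalities characterising two proximal
   points shows that prox^L_phi is Lipschitz, so F_nat is continuous.
   A map whose norm is lower semicontinuous stays away from 0 near every point
   where it does not vanish.  Existence of the minimisers (the proximal point,
   the steepest direction, the smallest eigenvalue of L) comes from
   compactness of Euclidean balls. *)

From HB Require Import structures.
From mathcomp Require Import all_boot all_order all_algebra.
From mathcomp Require Import all_classical all_reals all_analysis.
From mathcomp Require Import ring lra.
Set Implicit Arguments. Unset Strict Implicit. Unset Printing Implicit Defensive.
Import Order.TTheory GRing.Theory Num.Theory.
Import numFieldNormedType.Exports.
Local Open Scope classical_set_scope.
Local Open Scope ring_scope.

Section Euclidean.
Variables (R : realType) (n : nat).
Notation vec := 'cV[R]_n.
Implicit Types (u v w : vec).

Lemma dotvE u v : dotv u v = \sum_i u i 0 * v i 0.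
Proof. by rewrite /dotv !mxE; apply: eq_bigr => i _; rewrite mxE. Qed.

Lemma dotvC u v : dotv u v = dotv v u.
Proof. by rewrite !dotvE; apply: eq_bigr => i _; rewrite mulrC. Qed.

Lemma dotvDl u v w : dotv (u + v) w = dotv u w + dotv v w.
Proof. by rewrite !dotvE -big_split; apply: eq_bigr => i _; rewrite mxE mulrDl. Qed.

Lemma dotvDr u v w : dotv w (u + v) = dotv w u + dotv w v.
Proof. by rewrite dotvC dotvDl !(dotvC w). Qed.

Lemma dotvZl a u v : dotv (a *: u) v = a * dotv u v.
Proof. by rewrite !dotvE mulr_sumr; apply: eq_bigr => i _; rewrite mxE mulrA. Qed.

Lemma dotvZr a u v : dotv u (a *: v) = a * dotv u v.
Proof. by rewrite dotvC dotvZl dotvC. Qed.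

Lemma dotvNl u v : dotv (- u) v = - dotv u v.
Proof. by rewrite -scaleN1r dotvZl mulN1r. Qed.

Lemma dotvNr u v : dotv u (- v) = - dotv u v.
Proof. by rewrite dotvC dotvNl dotvC. Qed.

Lemma dotvBl u v w : dotv (u - v) w = dotv u w - dotv v w.
Proof. by rewrite dotvDl dotvNl. Qed.

Lemma dotvBr u v w : dotv w (u - v) = dotv w u - dotv w v.
Proof. by rewrite dotvDr dotvNr. Qed.

Lemma dotv0l v : dotv 0 v = 0.
Proof. by rewrite -(scale0r 0) dotvZl mul0r. Qed.

Lemma dotv0r v : dotv v 0 = 0.
Proof. by rewrite dotvC dotv0l. Qed.

Lemma dotvv_ge0 v : 0 <= dotv v v.
Proof. by rewrite dotvE; apply: sumr_ge0 => i _; exact: sqr_ge0. Qed.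

Lemma dotvv_eq0 v : (dotv v v == 0) = (v == 0).
Proof.
apply/idP/idP => [|/eqP->]; last by rewrite dotv0l.
rewrite dotvE psumr_eq0; last by move=> i _; exact: sqr_ge0.
move/allP => H; apply/eqP/matrixP => i j; rewrite (ord1 j) mxE.
by have := H i (mem_index_enum _); rewrite /= mulf_eq0 orbb => /eqP.
Qed.

Lemma enorm_ge0 v : 0 <= enorm v.
Proof. exact: sqrtr_ge0. Qed.

Lemma enorm_sqr v : enorm v ^+ 2 = dotv v v.
Proof. by rewrite sqr_sqrtr // dotvv_ge0. Qed.

Lemma enorm_eq0 v : (enorm v == 0) = (v == 0).
Proof. by rewrite /enorm sqrtr_eq0 le_eqVlt ltNge dotvv_ge0 orbF dotvv_eq0. Qed.

Lemma enorm0 : enorm (0 : vec) = 0.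
Proof. by apply/eqP; rewrite enorm_eq0. Qed.

Lemma enorm_gt0 v : v != 0 -> 0 < enorm v.
Proof. by move=> v0; rewrite lt_neqAle enorm_ge0 eq_sym enorm_eq0 v0. Qed.

Lemma dotv_sqr_le u v : dotv u v ^+ 2 <= dotv u u * dotv v v.
Proof.
have [/eqP|uu] := eqVneq (dotv u u) 0.
  by rewrite dotvv_eq0 => /eqP ->; rewrite !dotv0l expr0n /= mul0r.
have upos : 0 < dotv u u by rewrite lt_neqAle eq_sym uu dotvv_ge0.
have := dotvv_ge0 (v - (dotv u v / dotv u u) *: u).
rewrite !dotvBl !dotvBr !dotvZl !dotvZr (dotvC v u).
set a := dotv u u; set b := dotv u v; set c := dotv v v => H.
have := mulr_ge0 (ltW upos) H.
suff -> : a * (c - b / a * b - (b / a * b - b / a * (b / a * a))) = a * c - b ^+ 2.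
  by rewrite subr_ge0.
by field; rewrite /a gt_eqF.
Qed.

Lemma normr_dotv_le u v : `|dotv u v| <= enorm u * enorm v.
Proof.
rewrite -(@ler_pXn2r _ 2) // ?nnegrE ?mulr_ge0 ?enorm_ge0 //.
by rewrite real_normK ?num_real // exprMn !enorm_sqr dotv_sqr_le.
Qed.

Lemma dotv_le u v : dotv u v <= enorm u * enorm v.
Proof. exact: le_trans (ler_norm _) (normr_dotv_le u v). Qed.

Lemma enormD u v : enorm (u + v) <= enorm u + enorm v.
Proof.
rewrite -(@ler_pXn2r _ 2) // ?nnegrE ?addr_ge0 ?enorm_ge0 //.
rewrite enorm_sqr dotvDl !dotvDr sqrrD !enorm_sqr (dotvC v u).
have := dotv_le u v; lra.
Qed.

Lemma enormZ a v : enorm (a *: v) = `|a| * enorm v.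
Proof.
by rewrite /enorm dotvZl dotvZr mulrA -expr2 sqrtrM ?sqr_ge0 // sqrtr_sqr.
Qed.

Lemma enormN v : enorm (- v) = enorm v.
Proof. by rewrite -scaleN1r enormZ normrN normr1 mul1r. Qed.

Lemma enormBC u v : enorm (u - v) = enorm (v - u).
Proof. by rewrite -enormN opprB. Qed.

Lemma enormB u v : enorm (u - v) <= enorm u + enorm v.
Proof. by have := enormD u (- v); rewrite enormN. Qed.

Lemma lerB_enorm u v : enorm u - enorm v <= enorm (u - v).
Proof. by have := enormD (u - v) v; rewrite subrK lerBlDr. Qed.

Lemma enorm_normalize v : v != 0 -> enorm ((enorm v)^-1 *: v) = 1.
Proof.
move=> v0; have e0 := enorm_gt0 v0.
by rewrite enormZ ger0_norm ?invr_ge0 ?ltW // mulVf // gt_eqF.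
Qed.

Lemma normr_coord_le v i : `|v i 0| <= enorm v.
Proof.
rewrite -(@ler_pXn2r _ 2) // ?nnegrE ?enorm_ge0 //.
rewrite enorm_sqr dotvE real_normK ?num_real // (bigD1 i) //= lerDl.
by apply: sumr_ge0 => j _; exact: sqr_ge0.
Qed.

Lemma enorm_le_sum v : enorm v <= \sum_i `|v i 0|.
Proof.
rewrite -(@ler_pXn2r _ 2) // ?nnegrE ?enorm_ge0 ?sumr_ge0 //.
rewrite enorm_sqr dotvE expr2 mulr_suml; apply: ler_sum => i _.
rewrite mulr_sumr (bigD1 i) //= -normrM.
by rewrite ler_wpDr ?sumr_ge0 // ?real_ler_norm ?num_real.
Qed.

Lemma vec_dim0 : n = 0%N -> forall v, v = 0.
Proof. by move=> n0 v; apply/matrixP => i; have := ltn_ord i; rewrite {2}n0. Qed.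

Lemma exists_vec_neq0 : (0 < n)%N -> exists v : vec, v != 0.
Proof.
move=> np; exists (delta_mx (Ordinal np) 0); apply/eqP.
by move/matrixP => /(_ (Ordinal np) 0); rewrite !mxE !eqxx => /eqP; rewrite oner_eq0.
Qed.

Definition mnorm (A : 'M[R]_n) : R := \sum_i \sum_j `|A i j|.

Lemma mnorm_ge0 A : 0 <= mnorm A.
Proof. by apply: sumr_ge0 => i _; apply: sumr_ge0. Qed.

Lemma enorm_mulmx_le (A : 'M[R]_n) v : enorm (A *m v) <= mnorm A * enorm v.
Proof.
apply: le_trans (enorm_le_sum _) _.
rewrite /mnorm mulr_suml; apply: ler_sum => i _.
rewrite mxE mulr_suml; apply: le_trans (ler_norm_sum _ _ _) _.
apply: ler_sum => j _; rewrite normrM; apply: ler_wpM2l => //.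
exact: normr_coord_le.
Qed.

End Euclidean.

Section Continuity.
Variables (R : realType) (n : nat).
Notation vec := 'cV[R]_n.
Implicit Types (u v w : vec) (F G : vec -> R).

Definition econtinuous F := forall x eps, 0 < eps -> exists delta, 0 < delta /\
  forall y, enorm (y - x) < delta -> `|F y - F x| < eps.

Lemma econtinuous_rV F : econtinuous F -> continuous (fun w : 'rV[R]_n => F w^T).
Proof.
move=> cF w0; apply/(@cvgrPdist_lt _ _ _ (nbhs w0) (nbhs_filter w0)) => e e0.
have [d [d0 Hd]] := cF (w0^T) e e0.
have dn : 0 < d / n.+1%:R by rewrite divr_gt0.
near=> w; rewrite distrC; apply: Hd.
apply: le_lt_trans (enorm_le_sum _) _.
have : ball w0 (d / n.+1%:R) w by near: w; exact: (@near_ball _ _ w0 _ dn).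
case=> _ H.
apply: (@le_lt_trans _ _ (\sum_(i < n) d / n.+1%:R)).
  apply: ler_sum => i _; rewrite !mxE; have := H ord0 i.
  by rewrite /ball /= distrC => /ltW.
rewrite sumr_const card_ord -[_ *+ n]mulr_natr mulrAC ltr_pdivrMr ?ltr0Sn //.
by rewrite ltr_pM2l // ltr_nat.
Unshelve. all: by end_near.
Qed.

Lemma econtinuous_enormB c : econtinuous (fun v => enorm (v - c)).
Proof.
move=> x e e0; exists e; split => // y Hy.
have H1 := lerB_enorm (y - c) (x - c); have H2 := lerB_enorm (x - c) (y - c).
have E : forall a b : vec, a - c - (b - c) = a - b by move=> a b; rewrite opprB addrA subrK.
rewrite E in H1; rewrite E enormBC in H2.
rewrite ltr_norml; apply/andP; split; lra.
Qed.

Lemma econtinuousD_scale F G (c : R) :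
  econtinuous F -> econtinuous G -> econtinuous (fun y => F y + c * G y).
Proof.
move=> cF cG x e e0.
have e2 : 0 < e / 2 by rewrite divr_gt0.
have c1 : 0 < `|c| + 1 by rewrite ltr_pwDr.
have [d1 [d10 H1]] := cF x _ e2.
have [d2 [d20 H2]] := cG x _ (divr_gt0 e2 c1).
exists (Num.min d1 d2); split; first by rewrite lt_min d10 d20.
move=> y; rewrite lt_min => /andP[/H1 h1 /H2 h2].
have -> : F y + c * G y - (F x + c * G x) = (F y - F x) + c * (G y - G x) by ring.
apply: le_lt_trans (ler_normD _ _) _; rewrite normrM.
have : (`|c| + 1) * `|G y - G x| < e / 2 by rewrite mulrC -ltr_pdivlMr.
have := normr_ge0 (G y - G x); nra.
Qed.

Lemma econtinuous_locally_lipschitz F :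
  (forall x, exists K, forall y, enorm (y - x) < 1 -> `|F y - F x| <= K * enorm (y - x)) ->
  econtinuous F.
Proof.
move=> H x e e0; have [K HK] := H x.
have K0 : 0 < `|K| + 1 by rewrite ltr_pwDr.
exists (Num.min 1 (e / (`|K| + 1))); split; first by rewrite lt_min ltr01 divr_gt0.
move=> y; rewrite lt_min => /andP[/HK y1 ye]; apply: le_lt_trans y1 _.
rewrite ltr_pdivlMr // mulrC in ye; apply: le_lt_trans ye.
by apply: ler_wpM2r; [exact: enorm_ge0 | rewrite ler_wpDr // ler_norm].
Qed.

Lemma econtinuous_min_annulus F c r rho : econtinuous F ->
  (exists v, r <= enorm (v - c) <= rho) ->
  exists2 d, r <= enorm (d - c) <= rho &
    forall e, r <= enorm (e - c) <= rho -> F d <= F e.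
Proof.
move=> cF [v0 Hv0].
pose A := [set w : 'rV[R]_n | r <= enorm (w^T - c) <= rho].
have cN := econtinuous_rV (econtinuous_enormB c).
have Acl : closed A.
  have -> : A = (fun w : 'rV[R]_n => enorm (w^T - c)) @^-1` [set x | r <= x] `&`
                (fun w : 'rV[R]_n => enorm (w^T - c)) @^-1` [set x | x <= rho].
    by apply/seteqP; split => w /=; [move/andP | move=> [? ?]; apply/andP].
  by apply: closedI; apply: closed_comp; [move=> w _; exact: cN | exact: closed_ge
                                         | move=> w _; exact: cN | exact: closed_le].
have Bco : compact [set w : 'rV[R]_n | forall i,
     `[c i 0 - rho, c i 0 + rho]%classic (w ord0 i)].
  by apply: (@rV_compact _ _ (fun i => `[c i 0 - rho, c i 0 + rho]%classic)) => i;
     exact: segment_compact.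
have cA : compact A.
  apply: subclosed_compact Acl Bco _ => w /andP[_ Hw] i /=.
  have := le_trans (normr_coord_le (w^T - c) i) Hw.
  by rewrite !mxE ler_norml in_itv /= => /andP[H1 H2]; apply/andP; split; lra.
have A0 : A !=set0 by exists v0^T; rewrite /A /= trmxK.
have [d dA Hd] := compact_EVT_min A0 cA (continuous_subspaceT (econtinuous_rV cF)).
move: dA; rewrite inE => dA.
exists d^T => // e He; have := Hd e^T; rewrite trmxK; apply.
by rewrite inE /A /= trmxK.
Qed.

Lemma econtinuous_min_ball F c rho : econtinuous F -> 0 <= rho ->
  exists2 d, enorm (d - c) <= rho & forall e, enorm (e - c) <= rho -> F d <= F e.
Proof.
move=> cF rho0.
have [|d /andP[_ Hd] Hmin] := @econtinuous_min_annulus F c 0 rho cF.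
  by exists c; rewrite subrr enorm0 lexx rho0.
by exists d => // e He; apply: Hmin; rewrite enorm_ge0 He.
Qed.

End Continuity.

Section QuadraticForm.
Variables (R : realType) (n : nat) (L : 'M[R]_n).
Notation vec := 'cV[R]_n.
Implicit Types (u v w : vec).

Lemma dotv_mulmx_sym u v : L^T = L -> dotv u (L *m v) = dotv v (L *m u).
Proof.
move=> LT; rewrite !dotvE.
under eq_bigr do rewrite mxE big_distrr /=.
under [RHS]eq_bigr do rewrite mxE big_distrr /=.
rewrite exchange_big /=; apply: eq_bigr => i _; apply: eq_bigr => j _.
by rewrite -[in RHS]LT mxE; ring.
Qed.

Lemma econtinuous_quad z : econtinuous (fun y => dotv (y - z) (L *m (y - z))).
Proof.
apply: econtinuous_locally_lipschitz => x.
exists (mnorm L * (2 * enorm (x - z) + 1)) => y yx.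
have E (a b : vec) :
    dotv a (L *m a) - dotv b (L *m b) = dotv (a - b) (L *m a) + dotv b (L *m (a - b)).
  by rewrite mulmxBr dotvBl dotvBr; ring.
rewrite E; set a := y - z; set b := x - z.
have ab : a - b = y - x by rewrite /a /b opprB addrA subrK.
rewrite ab; apply: le_trans (ler_normD _ _) _.
have h1 := normr_dotv_le (y - x) (L *m a); have h2 := normr_dotv_le b (L *m (y - x)).
have h3 := enorm_mulmx_le L a; have h4 := enorm_mulmx_le L (y - x).
have ha : enorm a <= enorm b + enorm (y - x) by rewrite -ab -{1}(subrK b a) addrC enormD.
have := enorm_ge0 (y - x); have := enorm_ge0 b; have := mnorm_ge0 L.
have := enorm_ge0 a; have := enorm_ge0 (L *m a); have := enorm_ge0 (L *m (y - x)).
nra.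
Qed.

Lemma sym_pos_def_lower_bound : sym_pos_def L ->
  exists2 lam, 0 < lam & forall v, lam * enorm v ^+ 2 <= dotv v (L *m v).
Proof.
move=> [_ Lpos].
have [n0|npos] := posnP n.
  by exists 1 => // v; rewrite (vec_dim0 n0 v) mulmx0 dotv0r enorm0 expr0n mulr0.
(* the minimum of the quadratic form on the unit sphere *)
have [|d /andP[d1 _] Hmin] := @econtinuous_min_annulus _ _ _ 0 1 1 (econtinuous_quad 0).
  have [v v0] := exists_vec_neq0 R npos.
  by exists ((enorm v)^-1 *: v); rewrite subr0 enorm_normalize // lexx.
rewrite subr0 in d1.
have {}Hmin e : enorm e = 1 -> dotv d (L *m d) <= dotv e (L *m e).
  by move=> e1; have := Hmin e; rewrite /= !subr0 e1 lexx; apply.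
have d0 : d != 0 by apply: contraTneq d1 => ->; rewrite enorm0 ler10.
exists (dotv d (L *m d)); first exact: Lpos.
move=> v; have [->|v0] := eqVneq v 0.
  by rewrite mulmx0 dotv0r enorm0 expr0n mulr0.
have := Hmin _ (enorm_normalize v0).
rewrite -scalemxAr dotvZl dotvZr mulrA -expr2 exprVn => H.
have ev2 : 0 < enorm v ^+ 2 by rewrite exprn_gt0 // enorm_gt0.
by rewrite -ler_pdivlMr // mulrC.
Qed.

End QuadraticForm.

Section LowerSemicontinuity.
Variables (R : realType) (n : nat).
Notation vec := 'cV[R]_n.
Implicit Types (g h : vec -> vec).

Definition lsc_enorm g := forall x eta, 0 < eta -> exists2 delta, 0 < delta &
  forall y, enorm (y - x) < delta -> enorm (g x) - eta < enorm (g y).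

Lemma lsc_enorm_bounded_away g : lsc_enorm g -> locally_bounded_away g.
Proof.
move=> lg x gx0; have e0 : 0 < enorm (g x) / 2 by rewrite divr_gt0 ?enorm_gt0.
have [delta d0 Hd] := lg x _ e0.
exists delta, (enorm (g x) / 2); do 2!split => //.
by move=> y /Hd; rewrite {1}(splitr (enorm (g x))) addrK => /ltW.
Qed.

Lemma vcontinuous_lsc_enorm g : vcontinuous g -> lsc_enorm g.
Proof.
move=> cg x eta /(cg x) [delta [d0 Hd]]; exists delta => // y /Hd.
by rewrite enormBC; have := lerB_enorm (g x) (g y); lra.
Qed.

Lemma vcontinuous_dominated g h (a b : R) : vcontinuous h ->
  (forall x y, enorm (g y - g x) <= a * enorm (y - x) + b * enorm (h y - h x)) ->
  vcontinuous g.
Proof.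
move=> ch Hg x e e0.
have a0 : 0 < 2 * (`|a| + 1) by rewrite mulr_gt0 // ltr_pwDr.
have b0 : 0 < 2 * (`|b| + 1) by rewrite mulr_gt0 // ltr_pwDr.
have [d [d0 Hd]] := ch x _ (divr_gt0 e0 b0).
exists (Num.min d (e / (2 * (`|a| + 1)))); split; first by rewrite lt_min d0 divr_gt0.
move=> y; rewrite lt_min => /andP[/Hd hy]; rewrite ltr_pdivlMr // => yx.
rewrite ltr_pdivlMr // in hy; apply: le_lt_trans (Hg x y) _.
have := enorm_ge0 (y - x); have := enorm_ge0 (h y - h x).
have := ler_norm a; have := ler_norm b; nra.
Qed.

End LowerSemicontinuity.

Section ConvexFunction.
Variables (R : realType) (n : nat) (phi : 'cV[R]_n -> R).
Hypothesis cphi : convex_fun phi.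
Notation vec := 'cV[R]_n.

Lemma convex_jensen (I : eqType) (s : seq I) (w : I -> R) (p : I -> vec) :
  (forall i, 0 <= w i) -> \sum_(i <- s) w i = 1 ->
  phi (\sum_(i <- s) w i *: p i) <= \sum_(i <- s) w i * phi (p i).
Proof.
elim: s w => [|a s IH] w w0; first by rewrite big_nil => /esym/eqP; rewrite oner_eq0.
rewrite !big_cons; set W := \sum_(i <- s) w i => ws.
have W0 : 0 <= W by apply: sumr_ge0.
have [WE|Wneq0] := eqVneq W 0.
  have wi0 i : i \in s -> w i = 0.
    move=> Hi; move/eqP: WE; rewrite psumr_eq0 //.
    by move/allP => /(_ i Hi) /implyP /(_ isT) /eqP.
  rewrite big1_seq => [|i /andP[_ /wi0->]]; last by rewrite scale0r.
  rewrite big1_seq => [|i /andP[_ /wi0->]]; last by rewrite mul0r.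
  by move: ws; rewrite WE addr0 => ->; rewrite scale1r mul1r !addr0.
have Wp : 0 < W by rewrite lt_neqAle eq_sym Wneq0 W0.
have IHs := IH (fun i => w i / W) (fun i => divr_ge0 (w0 i) W0).
rewrite -mulr_suml -/W divff // in IHs; have {}IHs := IHs erefl.
have -> : \sum_(i <- s) w i *: p i = W *: \sum_(i <- s) (w i / W) *: p i.
  by rewrite scaler_sumr; apply: eq_bigr => i _; rewrite scalerA mulrCA divff ?mulr1.
have -> : \sum_(i <- s) w i * phi (p i) = W * \sum_(i <- s) (w i / W) * phi (p i).
  by rewrite mulr_sumr; apply: eq_bigr => i _; rewrite mulrA mulrCA divff ?mulr1.
have wa1 : w a <= 1 by rewrite -ws lerDl.
have := cphi (p a) (\sum_(i <- s) (w i / W) *: p i) (w0 a) wa1.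
have <- : W = 1 - w a by rewrite -ws addrAC subrr add0r.
by move/le_trans; apply; rewrite lerD2l ler_wpM2l.
Qed.

Lemma convex_segment_bound (x : vec) i s : `|s| <= 1 ->
  phi (x + s *: delta_mx i 0) <=
    `|phi (x + delta_mx i 0)| + `|phi (x - delta_mx i 0)|.
Proof.
rewrite ler_norml => /andP[s1 s2]; pose t := (1 + s) / 2.
have t0 : 0 <= t by rewrite /t divr_ge0 //; lra.
have t1 : t <= 1 by rewrite /t ler_pdivrMr //; lra.
have -> : x + s *: delta_mx i 0 =
    t *: (x + delta_mx i 0) + (1 - t) *: (x - delta_mx i 0).
  by apply/matrixP => k l; rewrite !mxE /t; field.
apply: le_trans (cphi _ _ t0 t1) _.
have := ler_wpM2l t0 (ler_norm (phi (x + delta_mx i 0))).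
have t1' : 0 <= 1 - t by rewrite subr_ge0.
have := ler_wpM2l t1' (ler_norm (phi (x - delta_mx i 0))).
have := normr_ge0 (phi (x + delta_mx i 0)); have := normr_ge0 (phi (x - delta_mx i 0)).
nra.
Qed.

Lemma convex_bounded_above_near (x : vec) :
  exists r M, 0 < r /\ forall h, enorm h <= r -> phi (x + h) <= M.
Proof.
have [n0|npos] := posnP n.
  by exists 1, (phi x); split => // h _; rewrite (vec_dim0 n0 h) addr0.
have nR : 0 < n%:R :> R by rewrite ltr0n.
pose M : R := \sum_i (`|phi (x + delta_mx i 0)| + `|phi (x - delta_mx i 0)|).
exists n%:R^-1, M; split => [|h hr]; first by rewrite invr_gt0.
(* x + h is the barycentre of the n points x + n h_i e_i *)
have w1 : \sum_(i <- index_enum 'I_n) n%:R^-1 = 1 :> R.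
  by rewrite sumr_const card_ord -[_ *+ n]mulr_natr mulVf ?gt_eqF.
have -> : x + h = \sum_(i <- index_enum 'I_n)
                     n%:R^-1 *: (x + (n%:R * h i 0) *: delta_mx i 0).
  rewrite (eq_bigr (fun i => n%:R^-1 *: x + h i 0 *: delta_mx i 0)); last first.
    by move=> i _; rewrite scalerDr scalerA mulrA mulVf ?gt_eqF // mul1r.
  rewrite big_split /= -scaler_suml w1 scale1r; congr (_ + _).
  by rewrite {1}(matrix_sum_delta h); apply: eq_bigr => i _; rewrite big_ord1.
have w0 (i : 'I_n) : 0 <= n%:R^-1 :> R by rewrite invr_ge0 ltW.
apply: le_trans (convex_jensen (fun i => x + (n%:R * h i 0) *: delta_mx i 0) w0 w1) _.
apply: (@le_trans _ _ (\sum_(i <- index_enum 'I_n) n%:R^-1 * M)); last first.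
  by rewrite -mulr_suml w1 mul1r.
apply: ler_sum => i _.
apply: ler_wpM2l; first by rewrite invr_ge0 ltW.
apply: le_trans (convex_segment_bound _ _ _) _.
  rewrite normrM (ger0_norm (ltW nR)) -ler_pdivlMl //.
  rewrite mulr1; exact: le_trans (normr_coord_le h i) hr.
rewrite /M (bigD1 i) //= lerDl; apply: sumr_ge0 => j _.
by rewrite addr_ge0.
Qed.

Lemma convex_econtinuous : econtinuous phi.
Proof.
move=> x e e0.
have [r [M [r0 HM]]] := convex_bounded_above_near x.
have Mx : phi x <= M by have := HM 0; rewrite enorm0 addr0; apply; exact: ltW.
pose K := M - phi x + 1.
have K0 : 0 < K by rewrite /K; lra.
exists (Num.min r (e * r / K)); split; first by rewrite lt_min r0 !mulr_gt0 ?invr_gt0.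
move=> y; rewrite lt_min => /andP[sr sK].
have [->|yx] := eqVneq y x; first by rewrite subrr normr0.
set s := enorm (y - x) in sr sK.
have s0 : 0 < s by apply: enorm_gt0; rewrite subr_eq0.
have rs0 : 0 <= r / s by rewrite divr_ge0 // ltW.
have Hball c : `|c| = r / s -> phi (x + c *: (y - x)) <= M.
  by move=> Hc; apply: HM; rewrite enormZ Hc -/s divfK ?gt_eqF.
(* y lies between x and the point at distance r beyond it, and x lies between
   y and the point at distance r on the other side *)
have I1 : phi y <= s / r * M + (1 - s / r) * phi x.
  have -> : y = (s / r) *: (x + (r / s) *: (y - x)) + (1 - s / r) *: x.
    by apply/matrixP => k l; rewrite !mxE; field; rewrite !gt_eqF.
  apply: le_trans (cphi _ _ _ _) _; first by rewrite divr_ge0 // ltW.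
    by rewrite ler_pdivrMr // mul1r ltW.
  rewrite lerD2r; apply: ler_wpM2l; first by rewrite divr_ge0 // ltW.
  by apply: Hball; rewrite ger0_norm.
have I2 : phi x <= s / (r + s) * M + (1 - s / (r + s)) * phi y.
  have {1}-> : x = (s / (r + s)) *: (x + (- (r / s)) *: (y - x)) + (1 - s / (r + s)) *: y.
    by apply/matrixP => k l; rewrite !mxE; field; rewrite !gt_eqF ?addr_gt0.
  apply: le_trans (cphi _ _ _ _) _; first by rewrite divr_ge0 // ltW ?addr_gt0.
    by rewrite ler_pdivrMr ?addr_gt0 // mul1r lerDr ltW.
  rewrite lerD2r; apply: ler_wpM2l; first by rewrite divr_ge0 // ltW ?addr_gt0.
  by apply: Hball; rewrite normrN ger0_norm.
have J1 : r * phi y <= s * M + (r - s) * phi x.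
  have := ler_wpM2l (ltW r0) I1.
  by have -> : r * (s / r * M + (1 - s / r) * phi x) = s * M + (r - s) * phi x
    by field; rewrite gt_eqF.
have J2 : (r + s) * phi x <= s * M + r * phi y.
  have := ler_wpM2l (ltW (addr_gt0 r0 s0)) I2.
  by have -> : (r + s) * (s / (r + s) * M + (1 - s / (r + s)) * phi y) = s * M + r * phi y
    by field; rewrite gt_eqF ?addr_gt0.
have sK' : s * K < e * r by rewrite -ltr_pdivlMr.
rewrite /K in sK'; rewrite ltr_norml; apply/andP; split; nra.
Qed.

Lemma convex_affine_minorant (z : vec) :
  exists2 b, 0 <= b & forall y, phi z - 1 - b * enorm (y - z) <= phi y.
Proof.
have [d [d0 Hd]] := convex_econtinuous z ltr01.
pose rho := d / 2.
have rho0 : 0 < rho by rewrite divr_gt0.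
have rhod : rho < d by rewrite /rho ltr_pdivrMr // ltr_pMr // ltr1n.
exists rho^-1 => [|y]; first by rewrite invr_ge0 ltW.
set s := enorm (y - z); have s0 : 0 <= s := enorm_ge0 _.
have [srho|srho] := leP s rho.
  have : `|phi y - phi z| < 1 by apply: Hd; exact: le_lt_trans srho rhod.
  rewrite ltr_norml => /andP[h _].
  have : 0 <= rho^-1 * s by rewrite mulr_ge0 // invr_ge0 ltW.
  lra.
(* compare with the point u at distance rho from z on the segment [z, y] *)
have sp : 0 < s := lt_trans rho0 srho.
set u := z + (rho / s) *: (y - z).
have : `|phi u - phi z| < 1.
  apply: Hd; rewrite /u addrC addKr enormZ ger0_norm ?divr_ge0 ?ltW //.
  by rewrite -/s divfK ?gt_eqF.
rewrite ltr_norml => /andP[h _].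
have t0 : 0 <= rho / s by rewrite divr_ge0 // ltW.
have t1 : rho / s <= 1 by rewrite ler_pdivrMr // mul1r ltW.
have := cphi y z t0 t1.
have -> : rho / s *: y + (1 - rho / s) *: z = u.
  by apply/matrixP => i j; rewrite !mxE; field; rewrite gt_eqF.
move=> /(ler_wpM2l (ltW sp)).
have -> : s * (rho / s * phi y + (1 - rho / s) * phi z) = rho * phi y + (s - rho) * phi z.
  by field; rewrite gt_eqF.
move=> hc.
suff : phi z - rho^-1 * s <= phi y by lra.
rewrite -(ler_pM2l rho0) mulrBr mulrA divff ?gt_eqF // mul1r.
nra.
Qed.

End ConvexFunction.

Lemma ge0_perturbation (R : realFieldType) (A B : R) :
  (forall t, 0 < t -> t <= 1 -> 0 <= A + t * B) -> 0 <= A.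
Proof.
move=> H; suff He (e : R) : 0 < e -> 0 <= A + e by apply/ler_addgt0Pr.
move=> e0.
have B1 : 0 < `|B| + 1 by rewrite ltr_pwDr.
pose t := Num.min 1 (e / (`|B| + 1)).
have t0 : 0 < t by rewrite lt_min ltr01 divr_gt0.
have tB : t * (`|B| + 1) <= e by rewrite -ler_pdivlMr // ge_min lexx orbT.
have t1 : t <= 1 by rewrite ge_min lexx.
have := H t t0 t1; have := ler_wpM2l (ltW t0) (ler_norm B).
rewrite mulrDr mulr1 in tB; lra.
Qed.

Section ProximalMap.
Variables (R : realType) (n : nat) (phi : 'cV[R]_n -> R) (L : 'M[R]_n).
Hypotheses (cphi : convex_fun phi) (spdL : sym_pos_def L).
Notation vec := 'cV[R]_n.
Implicit Types (u v w y z : vec).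

Definition prox_obj z y := phi y + 2^-1 * dotv (y - z) (L *m (y - z)).

Lemma quad_expand u v (t : R) :
  dotv (u + t *: v) (L *m (u + t *: v)) =
  dotv u (L *m u) + 2 * t * dotv u (L *m v) + t ^+ 2 * dotv v (L *m v).
Proof.
rewrite mulmxDr -scalemxAr !dotvDl !dotvDr !dotvZl !dotvZr.
by rewrite (dotv_mulmx_sym v u spdL.1); ring.
Qed.

Lemma prox_obj_min_exists z : exists p, forall w, prox_obj z p <= prox_obj z w.
Proof.
have [lam lam0 Hlam] := sym_pos_def_lower_bound spdL.
have [b b0 Hb] := convex_affine_minorant cphi z.
(* outside the ball of radius S the quadratic term beats the affine minorant *)
pose S := 1 + 2 * (b + 1) / lam.
have S1 : 1 <= S by rewrite lerDl divr_ge0 // ?mulr_ge0 ?addr_ge0 // ltW.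
have cobj : econtinuous (prox_obj z).
  exact: econtinuousD_scale (convex_econtinuous cphi) (econtinuous_quad L z).
have [p _ Hmin] := econtinuous_min_ball z cobj (le_trans ler01 S1).
exists p => w; have [|ws] := leP (enorm (w - z)) S; first exact: Hmin.
apply: le_trans (Hmin z _) _; first by rewrite subrr enorm0 (le_trans ler01 S1).
rewrite /prox_obj subrr dotv0l mulr0 addr0.
set s := enorm (w - z) in ws.
have := Hb w; have := Hlam (w - z); rewrite -/s => hl ha.
have hs : lam + 2 * (b + 1) < lam * s.
  have : lam * S < lam * s by rewrite ltr_pM2l.
  by rewrite /S mulrDr mulr1 mulrCA divff ?gt_eqF ?mulr1.
have : (b + 1) * s <= 2^-1 * (lam * s ^+ 2).
  rewrite expr2 mulrA [X in _ <= X](_ : _ = 2^-1 * (lam * s) * s); last by ring.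
  by apply: ler_wpM2r; [exact: enorm_ge0 | lra].
have := le_lt_trans S1 ws; nra.
Qed.

Lemma prox_min z w : prox_obj z (prox L phi z) <= prox_obj z w.
Proof. by move: w; apply: (xgetPex 0 (prox_obj_min_exists z)). Qed.

Lemma prox_obj_variational z p : (forall w, prox_obj z p <= prox_obj z w) ->
  forall w, 0 <= phi w - phi p + dotv (p - z) (L *m (w - p)).
Proof.
move=> H w; apply: (@ge0_perturbation _ _ (2^-1 * dotv (w - p) (L *m (w - p)))) => t t0 t1.
have := H (t *: w + (1 - t) *: p); have := cphi w p (ltW t0) t1.
rewrite /prox_obj.
have -> : t *: w + (1 - t) *: p - z = (p - z) + t *: (w - p).
  by apply/matrixP => i j; rewrite !mxE; ring.
rewrite quad_expand -(pmulr_rge0 _ t0).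
set D := dotv _ (L *m (w - p)); set Q := dotv (w - p) _; set q := dotv (p - z) _.
set m := phi _; move=> Hc Hm.
have -> : t * (phi w - phi p + D + t * (2^-1 * Q)) =
  t * phi w + (1 - t) * phi p - phi p + 2^-1 * (2 * t * D + t ^+ 2 * Q) by field.
lra.
Qed.

Lemma prox_obj_min_lipschitz lam z1 z2 p1 p2 : 0 < lam ->
  (forall v, lam * enorm v ^+ 2 <= dotv v (L *m v)) ->
  (forall w, prox_obj z1 p1 <= prox_obj z1 w) ->
  (forall w, prox_obj z2 p2 <= prox_obj z2 w) ->
  lam * enorm (p1 - p2) <= mnorm L * enorm (z1 - z2).
Proof.
move=> lam0 Hlam /prox_obj_variational /(_ p2) o1 /prox_obj_variational /(_ p1) o2.
(* adding the two variational inequalities *)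
have S : dotv (p1 - p2) (L *m (p1 - p2)) <= dotv (z1 - z2) (L *m (p1 - p2)).
  have E : dotv (p1 - z1) (L *m (p2 - p1)) + dotv (p2 - z2) (L *m (p1 - p2)) =
      dotv (z1 - z2) (L *m (p1 - p2)) - dotv (p1 - p2) (L *m (p1 - p2)).
    rewrite -[p2 - p1]opprB mulmxN dotvNr addrC -dotvBl -dotvBl; congr dotv.
    by apply/matrixP => i j; rewrite !mxE; ring.
  by rewrite -subr_ge0 -E; lra.
have e0 : 0 <= enorm (p1 - p2) := enorm_ge0 _.
have h2 : lam * enorm (p1 - p2) ^+ 2 <= mnorm L * enorm (z1 - z2) * enorm (p1 - p2).
  apply: le_trans (Hlam _) _; apply: le_trans S _.
  apply: le_trans (ler_norm _) _; apply: le_trans (normr_dotv_le _ _) _.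
  by rewrite -mulrA mulrCA ler_wpM2l ?enorm_ge0 ?enorm_mulmx_le.
have [->|ep] := eqVneq (enorm (p1 - p2)) 0; first by rewrite mulr0 mulr_ge0 ?mnorm_ge0 ?enorm_ge0.
have ep' : 0 < enorm (p1 - p2) by rewrite lt_neqAle eq_sym ep e0.
by rewrite -(ler_pM2r ep') -mulrA -expr2.
Qed.

Lemma prox_lipschitz : exists2 k, 0 <= k &
  forall z1 z2, enorm (prox L phi z1 - prox L phi z2) <= k * enorm (z1 - z2).
Proof.
have [lam lam0 Hlam] := sym_pos_def_lower_bound spdL.
exists (mnorm L / lam) => [|z1 z2]; first by rewrite divr_ge0 ?mnorm_ge0 ?ltW.
rewrite mulrAC ler_pdivlMr // mulrC.
exact: prox_obj_min_lipschitz lam0 Hlam (prox_min z1) (prox_min z2).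
Qed.

Lemma Fnat_vcontinuous gradf : vcontinuous gradf -> vcontinuous (Fnat L phi gradf).
Proof.
move=> cg; have [k k0 Hk] := prox_lipschitz.
apply: (@vcontinuous_dominated _ _ _ _ (1 + k) (k * mnorm (invmx L)) cg) => x y.
set zx := x - invmx L *m gradf x; set zy := y - invmx L *m gradf y.
have Hz : enorm (zy - zx) <= enorm (y - x) + mnorm (invmx L) * enorm (gradf y - gradf x).
  have -> : zy - zx = (y - x) - invmx L *m (gradf y - gradf x).
    by rewrite /zx /zy mulmxBr; apply/matrixP => i j; rewrite !mxE; ring.
  by apply: le_trans (enormB _ _) _; rewrite lerD2l enorm_mulmx_le.
have := Hk zy zx; rewrite /Fnat -/zx -/zy.
move: (prox L phi zy) (prox L phi zx) => py px Hp.
have -> : y - py - (x - px) = (y - x) - (py - px).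
  by apply/matrixP => i j; rewrite !mxE; ring.
apply: le_trans (enormB _ _) _.
have := ler_wpM2l k0 Hz; lra.
Qed.

End ProximalMap.

Section ConvexDirectionalDerivative.
Variables (R : realType) (n : nat) (phi : 'cV[R]_n -> R).
Hypothesis cphi : convex_fun phi.
Notation vec := 'cV[R]_n.
Implicit Types (x y d : vec).

Definition diffq y d (t : R) := (phi (y + t *: d) - phi y) / t.

Definition cvx_dirder y d := inf [set diffq y d t | t in [set t : R | 0 < t]].

Lemma diffq_mono y d t s : 0 < t -> t <= s -> diffq y d t <= diffq y d s.
Proof.
move=> t0 ts; have s0 : 0 < s := lt_le_trans t0 ts.
have a0 : 0 <= t / s by rewrite divr_ge0 // ltW.
have a1 : t / s <= 1 by rewrite ler_pdivrMr // mul1r.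
have := cphi (y + s *: d) y a0 a1.
have -> : t / s *: (y + s *: d) + (1 - t / s) *: y = y + t *: d.
  by apply/matrixP => i j; rewrite !mxE; field; rewrite gt_eqF.
move=> /(ler_wpM2l (ltW s0)).
have -> : s * (t / s * phi (y + s *: d) + (1 - t / s) * phi y) =
   t * phi (y + s *: d) + (s - t) * phi y by field; rewrite gt_eqF.
rewrite /diffq ler_pdivrMr // mulrAC ler_pdivlMr //; lra.
Qed.

Lemma diffq_ge y d t : 0 < t -> phi y - phi (y - d) <= diffq y d t.
Proof.
move=> t0; have t1 : 0 < 1 + t by rewrite addr_gt0.
have a0 : 0 <= t / (1 + t) by rewrite divr_ge0 // ltW.
have a1 : t / (1 + t) <= 1 by rewrite ler_pdivrMr // mul1r lerDr ler01.
have := cphi (y - d) (y + t *: d) a0 a1.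
have -> : t / (1 + t) *: (y - d) + (1 - t / (1 + t)) *: (y + t *: d) = y.
  by apply/matrixP => i j; rewrite !mxE; field; rewrite gt_eqF.
move=> /(ler_wpM2l (ltW t1)).
have -> : (1 + t) * (t / (1 + t) * phi (y - d) + (1 - t / (1 + t)) * phi (y + t *: d)) =
   t * phi (y - d) + phi (y + t *: d) by field; rewrite gt_eqF.
rewrite /diffq ler_pdivlMr //; lra.
Qed.

Lemma has_inf_diffq y d : has_inf [set diffq y d t | t in [set t : R | 0 < t]].
Proof.
split; first by exists (diffq y d 1), 1 => //=; exact: ltr01.
by exists (phi y - phi (y - d)) => r [t t0 <-]; exact: diffq_ge.
Qed.

Lemma cvx_dirder_le y d t : 0 < t -> cvx_dirder y d <= diffq y d t.
Proof. by move=> t0; apply: (ge_inf (has_inf_diffq y d).2); exists t. Qed.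

Lemma cvx_dirder_ge y d c : (forall t, 0 < t -> c <= diffq y d t) -> c <= cvx_dirder y d.
Proof.
move=> H; apply: lb_le_inf; first exact: (has_inf_diffq y d).1.
by move=> r [t t0 <-]; exact: H.
Qed.

Lemma cvx_dirder_approx y d e : 0 < e -> exists2 t0, 0 < t0 &
  forall t, 0 < t -> t <= t0 -> diffq y d t < cvx_dirder y d + e.
Proof.
move=> e0; have [r [t0 t00 <-] H] := inf_adherent e0 (has_inf_diffq y d).
by exists t0 => // t t1 t2; exact: le_lt_trans (diffq_mono y d t1 t2) H.
Qed.

Lemma cvx_dirder0 y : cvx_dirder y 0 = 0.
Proof.
have Q0 t : diffq y 0 t = 0 by rewrite /diffq scaler0 addr0 subrr mul0r.
apply/eqP; rewrite eq_le -{1}(Q0 1) cvx_dirder_le ?ltr01 //=.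
by apply: cvx_dirder_ge => t _; rewrite Q0.
Qed.

Lemma cvx_dirderZ y d c : 0 < c -> cvx_dirder y (c *: d) = c * cvx_dirder y d.
Proof.
move=> c0.
have QE t : 0 < t -> diffq y (c *: d) t = c * diffq y d (c * t).
  by move=> t0; rewrite /diffq scalerA (mulrC t c); field; rewrite !gt_eqF ?mulr_gt0.
apply/eqP; rewrite eq_le; apply/andP; split; last first.
  apply: cvx_dirder_ge => t t0; rewrite QE // ler_pM2l //.
  by apply: cvx_dirder_le; rewrite mulr_gt0.
rewrite -ler_pdivrMl //; apply: cvx_dirder_ge => t t0; rewrite ler_pdivrMl //.
have := cvx_dirder_le y (c *: d) (divr_gt0 t0 c0).
by rewrite QE ?divr_gt0 // [c * (t / c)]mulrC divfK ?gt_eqF.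
Qed.

Lemma cvx_dirder_convex y : convex_fun (cvx_dirder y).
Proof.
move=> a b l l0 l1.
apply/ler_addgt0Pr => e e0.
have [ta ta0 Ha] := cvx_dirder_approx y a e0.
have [tb tb0 Hb] := cvx_dirder_approx y b e0.
(* a common small step for both directions, then convexity of phi along it *)
pose t := Num.min ta tb.
have t0 : 0 < t by rewrite lt_min ta0 tb0.
have /(Ha t t0) ha : t <= ta by rewrite ge_min lexx.
have /(Hb t t0) hb : t <= tb by rewrite ge_min lexx orbT.
apply: le_trans (cvx_dirder_le _ _ t0) _.
have hc := cphi (y + t *: a) (y + t *: b) l0 l1.
rewrite (_ : l *: (y + t *: a) + (1 - l) *: (y + t *: b) =
             y + t *: (l *: a + (1 - l) *: b)) in hc;
  last by apply/matrixP => i j; rewrite !mxE; ring.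
have hm : diffq y (l *: a + (1 - l) *: b) t <= l * diffq y a t + (1 - l) * diffq y b t.
  rewrite /diffq ler_pdivrMr // mulrDl -!mulrA !mulVf ?gt_eqF // !mulr1; lra.
have l2 : 0 <= 1 - l by rewrite subr_ge0.
have := ler_wpM2l l0 (ltW ha); have := ler_wpM2l l2 (ltW hb); lra.
Qed.

Lemma cvx_dirder_usc x d eta : 0 < eta -> exists2 delta, 0 < delta &
  forall y, enorm (y - x) < delta -> cvx_dirder y d < cvx_dirder x d + eta.
Proof.
move=> eta0; have e2 : 0 < eta / 2 by rewrite divr_gt0.
have [t0 t00 Ht] := cvx_dirder_approx x d e2.
have hx := Ht t0 t00 (lexx _).
(* diffq . d t0 is continuous and bounds cvx_dirder . d from above *)
have ep : 0 < eta / 2 * t0 / 2 by rewrite !divr_gt0 // mulr_gt0.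
have [d1 [d10 H1]] := convex_econtinuous cphi x ep.
have [d2 [d20 H2]] := convex_econtinuous cphi (x + t0 *: d) ep.
exists (Num.min d1 d2) => [|y]; first by rewrite lt_min d10 d20.
rewrite lt_min => /andP[/H1 h1 y2].
have /H2 h2 : enorm (y + t0 *: d - (x + t0 *: d)) < d2 by rewrite opprD addrACA subrr addr0.
have : diffq y d t0 - diffq x d t0 < eta / 2.
  rewrite /diffq -mulrBl ltr_pdivrMr //.
  move: h1 h2; rewrite !ltr_norml => /andP[a0 a1] /andP[a2 a3].
  have -> : eta / 2 * t0 = 2 * (eta / 2 * t0 / 2) by field.
  lra.
have := cvx_dirder_le y d t00; have -> : eta = eta / 2 + eta / 2 by field.
lra.
Qed.

End ConvexDirectionalDerivative.

Section SteepestDescent.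
Variables (R : realType) (n : nat) (f phi : 'cV[R]_n -> R) (gradf : 'cV[R]_n -> 'cV[R]_n).
Hypotheses (cphi : convex_fun phi) (hgrad : forall x, is_gradient f x (gradf x))
  (gcont : vcontinuous gradf).
Notation vec := 'cV[R]_n.
Implicit Types (x y d e : vec).

Definition Dpsi y d := dotv (gradf y) d + cvx_dirder phi y d.

Lemma dirder_Dpsi y d : dirder (f \+ phi) y d = Dpsi y d.
Proof.
apply: cvg_lim; first exact: Rhausdorff.
apply/cvgrPdist_lt => e e0; have e2 : 0 < e / 2 by rewrite divr_gt0.
have [t0 t00 Ht0] := cvx_dirder_approx cphi y d e2.
have K0 : 0 < enorm d + 1 by rewrite ltr_pwDr // enorm_ge0.
have [df [df0 Hf]] := hgrad y (divr_gt0 e2 K0).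
near=> t.
have tpos : 0 < t by near: t; exact: nbhs_right_gt.
have : t < Num.min t0 (df / (enorm d + 1)).
  by near: t; apply: nbhs_right_lt; rewrite lt_min t00 divr_gt0.
rewrite lt_min => /andP[/ltW /(Ht0 t tpos) hq tdf].
have hq2 := cvx_dirder_le cphi y d tpos.
have /Hf : enorm (t *: d) < df.
  rewrite enormZ (ger0_norm (ltW tpos)); apply: le_lt_trans (_ : t * enorm d <= t * (enorm d + 1)) _.
    by rewrite ler_pM2l // lerDl.
  by rewrite -ltr_pdivlMr.
rewrite enormZ (ger0_norm (ltW tpos)) dotvZr.
set F1 := f (y + t *: d) - f y => hf.
have hQf : `|F1 / t - dotv (gradf y) d| <= e / 2.
  have -> : F1 / t - dotv (gradf y) d = (F1 - t * dotv (gradf y) d) / t.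
    by field; rewrite gt_eqF.
  rewrite normrM normfV (gtr0_norm tpos) ler_pdivrMr //; apply: le_trans hf _.
  have -> : e / 2 * t = e / 2 / (enorm d + 1) * (t * (enorm d + 1)).
    by field; rewrite gt_eqF.
  apply: ler_wpM2l; first by rewrite divr_ge0 // ltW.
  by apply: ler_wpM2l; [exact: ltW | rewrite lerDl].
have -> : (f \+ phi) (y + t *: d) - (f \+ phi) y = F1 + (phi (y + t *: d) - phi y).
  by rewrite /F1 /=; ring.
rewrite mulrDl -/(diffq phi y d t) /Dpsi.
move: hQf; rewrite ler_norml => /andP[h1 h2].
rewrite ltr_norml; apply/andP; split; lra.
Unshelve. all: by end_near.
Qed.

Lemma Dpsi0 y : Dpsi y 0 = 0.
Proof. by rewrite /Dpsi dotv0r cvx_dirder0 ?addr0. Qed.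

Lemma DpsiZ y d c : 0 < c -> Dpsi y (c *: d) = c * Dpsi y d.
Proof. by move=> c0; rewrite /Dpsi dotvZr cvx_dirderZ // mulrDr. Qed.

Lemma Dpsi_convex y : convex_fun (Dpsi y).
Proof.
move=> a b l l0 l1; have := cvx_dirder_convex cphi y a b l0 l1.
by rewrite /Dpsi dotvDr !dotvZr; lra.
Qed.

Lemma Dpsi_ge0 y : subdiff_comp gradf phi y 0 -> forall d, 0 <= Dpsi y d.
Proof.
move=> [v Hv /eqP]; rewrite addr_eq0 => /eqP vE d.
rewrite /Dpsi vE dotvNl addrC subr_ge0.
apply: (cvx_dirder_ge cphi) => t t0; have := Hv (y + t *: d).
rewrite addrAC subrr add0r dotvZr /diffq ler_pdivlMr //; lra.
Qed.

Lemma Dpsi_usc x d eta : 0 < eta -> exists2 delta, 0 < delta &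
  forall y, enorm (y - x) < delta -> Dpsi y d < Dpsi x d + eta.
Proof.
move=> eta0; have e2 : 0 < eta / 2 by rewrite divr_gt0.
have [d1 d10 H1] := cvx_dirder_usc cphi x d e2.
have K0 : 0 < enorm d + 1 by rewrite ltr_pwDr // enorm_ge0.
have [d2 [d20 H2]] := gcont x (divr_gt0 e2 K0).
exists (Num.min d1 d2) => [|y]; first by rewrite lt_min d10 d20.
rewrite lt_min => /andP[/H1 h1 /H2 h2].
have : dotv (gradf y) d - dotv (gradf x) d < eta / 2.
  rewrite -dotvBl; apply: le_lt_trans (dotv_le _ _) _.
  apply: le_lt_trans (_ : _ <= eta / 2 / (enorm d + 1) * enorm d) _.
    by rewrite ler_wpM2r ?enorm_ge0 ?ltW.
  by rewrite mulrAC ltr_pdivrMr // ltr_pM2l // ltrDl.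
rewrite /Dpsi; have -> : eta = eta / 2 + eta / 2 by field.
lra.
Qed.

Lemma dsteep_min y : enorm (dsteep f phi gradf y) <= 1 /\
  forall e, enorm e <= 1 -> Dpsi y (dsteep f phi gradf y) <= Dpsi y e.
Proof.
(* when 0 is a subgradient, D(y, .) >= 0 = D(y, 0), so d_s(y) = 0 is a minimiser too *)
rewrite /dsteep; case: asboolP => [/Dpsi_ge0 H0|_].
  by rewrite enorm0 ler01 Dpsi0.
have [d Hd Hmin] := econtinuous_min_ball 0 (convex_econtinuous (Dpsi_convex y)) ler01.
have /(xgetPex 0) [-> Hx] : exists d, enorm d <= 1 /\
    forall e, enorm e <= 1 -> dirder (f \+ phi) y d <= dirder (f \+ phi) y e.
  exists d; rewrite subr0 in Hd; split=> // e He; rewrite !dirder_Dpsi.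
  by apply: Hmin; rewrite subr0.
by split=> // e He; rewrite -!dirder_Dpsi Hx.
Qed.

Lemma enorm_scale_min y d : enorm d <= 1 ->
  (forall e, enorm e <= 1 -> Dpsi y d <= Dpsi y e) ->
  enorm (Dpsi y d *: d) = - Dpsi y d.
Proof.
move=> d1 Hmin; have := Hmin 0; rewrite enorm0 Dpsi0 => /(_ ler01).
rewrite le_eqVlt => /orP[/eqP->|v0]; first by rewrite scale0r enorm0 oppr0.
(* a minimiser with negative value lies on the unit sphere, by homogeneity *)
have dn0 : d != 0 by apply: contraTneq v0 => ->; rewrite Dpsi0 ltxx.
have en0 := enorm_gt0 dn0.
have := Hmin ((enorm d)^-1 *: d); rewrite enorm_normalize // lexx => /(_ isT).
rewrite DpsiZ ?invr_gt0 // => hc.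
have en1 : 1 <= enorm d.
  by rewrite -invf_le1 //; move: hc; rewrite -[X in X <= _]mul1r ler_nM2r.
rewrite enormZ.
have -> : enorm d = 1 by apply/eqP; rewrite eq_le d1 en1.
by rewrite ltr0_norm ?mulr1.
Qed.

Lemma enorm_g_steep y : enorm (g_steep f phi gradf y) = - Dpsi y (dsteep f phi gradf y).
Proof.
by rewrite /g_steep dirder_Dpsi; have [] := dsteep_min y; exact: enorm_scale_min.
Qed.

Lemma g_steep_lsc_enorm : lsc_enorm (g_steep f phi gradf).
Proof.
move=> x eta /(Dpsi_usc x (dsteep f phi gradf x)) [delta d0 Hd].
exists delta => // y /Hd hy; rewrite !enorm_g_steep -opprD ltrN2.
have [_ /(_ _ (dsteep_min x).1) hmin] := dsteep_min y.
exact: le_lt_trans hmin hy.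
Qed.

End SteepestDescent.

Theorem lemma4p2 (R : realType) (n : nat) (f phi : 'cV[R]_n -> R)
  (gradf : 'cV[R]_n -> 'cV[R]_n) (L : 'M[R]_n) :
  C1_with_gradient f gradf -> convex_fun phi -> sym_pos_def L ->
  locally_bounded_away (g_steep f phi gradf) /\
  locally_bounded_away (Fnat L phi gradf).
Proof.
move=> [hgrad gcont] cphi spdL; split; apply: lsc_enorm_bounded_away.
- exact: g_steep_lsc_enorm cphi hgrad gcont.
- exact/vcontinuous_lsc_enorm/Fnat_vcontinuous.
Qed.
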